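(* Let $n\ge 1$ and let $a_i=F_{i+2}-i-2$ for $i\ge 1$. Every game path of the Zeckendorf game on $n$ (starting from $\{F_1^n\}$) has length at most $\sum_{i=1}^{i_{\max}(n)} a_i\,\delta_i$, and $$\sum_{i=1}^{i_{\max}(n)} a_i\,\delta_i\ \le\ \frac{3+\sqrt5}{2}\,n-IZ(n)-\frac{1+\sqrt5}{2}\,Z(n).$$
   Context: Fibonacci numbers are indexed by $F_1=1$, $F_2=2$, $F_{i+1}=F_i+F_{i-1}$. A game state is a finite multiset of Fibonacci numbers (tracked by index); $\{F_1^n\}$ denotes $n$ copies of $F_1$. The legal moves are: $C_1$: replace $F_1,F_1$ by $F_2$; for $i\ge 2$, $C_i$: replace $F_{i-1},F_i$ by $F_{i+1}$; $S_2$: replace $F_2,F_2$ by $F_1,F_3$; for $i\ge 3$, $S_i$: replace $F_i,F_i$ by $F_{i-2},F_{i+1}$. The game on $n$ starts at $\{F_1^n\}$ and a game path is a sequence of legal moves continued until no legal move is available, which happens exactly at the Zeckendorf decomposition of $n$ (the unique representation of $n$ as a sum of $F_i$'s with distinct, pairwise non-consecutive indices); the length of a path is its number of moves. Write the Zeckendorf decomposition as $n=\sum_{i=1}^{i_{\max}(n)}\delta_i F_i$ with $\delta_i\in\{0,1\}$ and $i_{\max}(n)$ the largest index occurring; $Z(n)=\sum_i\delta_i$ and $IZ(n)=\sum_i i\,\delta_i$. *)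

From mathcomp Require Import all_boot all_order all_algebra.
From mathcomp Require Import all_reals.
Set Implicit Arguments. Unset Strict Implicit. Unset Printing Implicit Defensive.

(* Fibonacci numbers with F 1 = 1, F 2 = 2, F (i+1) = F i + F (i-1);
   F 0 := 1 is an auxiliary value making the recursion start correctly. *)
Fixpoint F (i : nat) : nat :=
  match i with
  | 0 => 1
  | 1 => 1
  | (j.+1) as k => match j with 0 => 2 | j'.+1 => F j + F j' end
  end.

(* A game state: multiset of Fibonacci numbers, tracked by index;
   s i = number of copies of F_i (index 0 unused). *)
Definition state := nat -> nat.

Definition start (n : nat) : state := fun j => if j == 1 then n else 0.

Definition move (s t : state) : Prop :=
  (* C_1 : F_1,F_1 -> F_2 *)
  (2 <= s 1 /\ forall j, t j =
      if j == 1 then s j - 2 else if j == 2 then s j + 1 else s j)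
  \/
  (* C_i, i >= 2 : F_{i-1},F_i -> F_{i+1} *)
  (exists i, 2 <= i /\ 1 <= s i.-1 /\ 1 <= s i /\ forall j, t j =
      if j == i.-1 then s j - 1 else if j == i then s j - 1
      else if j == i.+1 then s j + 1 else s j)
  \/
  (* S_2 : F_2,F_2 -> F_1,F_3 *)
  (2 <= s 2 /\ forall j, t j =
      if j == 2 then s j - 2 else if j == 1 then s j + 1
      else if j == 3 then s j + 1 else s j)
  \/
  (* S_i, i >= 3 : F_i,F_i -> F_{i-2},F_{i+1} *)
  (exists i, 3 <= i /\ 2 <= s i /\ forall j, t j =
      if j == i then s j - 2 else if j == i.-2 then s j + 1
      else if j == i.+1 then s j + 1 else s j).

Fixpoint is_path (s : state) (p : seq state) : Prop :=
  match p with
  | [::] => True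
  | t :: p' => move s t /\ is_path t p'
  end.

Definition game_path (n : nat) (p : seq state) : Prop :=
  is_path (start n) p /\ forall t, ~ move (last (start n) p) t.

Definition is_zeck (K : nat) (d : nat -> bool) (n : nat) : Prop :=
  (forall i, d i -> 1 <= i < K) /\
  (forall i, d i -> ~~ d i.+1) /\
  \sum_(1 <= i < K) d i * F i = n.

Definition a (i : nat) : nat := F i.+2 - i - 2.

From mathcomp Require Import all_boot all_order all_algebra all_reals.
From mathcomp Require Import zify ring lra.
Import Order.TTheory GRing.Theory Num.Theory.

(* A state is weighed in two ways: its value  sum_j s_j F_j  and its
   potential  sum_j s_j a_j.  Every legal move removes a multiset of occupied
   indices and creates another one with the same value, and the identities
   a_i + a_(i+1) < a_(i+2)  and  2 a_(i+2) < a_i + a_(i+3)  show that it raises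
   the potential by at least one.  Starting from {F_1^n} (potential 0), a game
   path therefore has length at most the potential of its final state.  A
   state with no legal move has 0/1 digits with no two consecutive ones, so
   by uniqueness of Zeckendorf digits it is the decomposition d of n, whose
   potential is  sum_i a_i d_i.  For the second inequality, with phi the
   golden ratio, e_i = F_(i+1) - phi F_i = F_(i+2) - phi^2 F_i satisfies
   e_(i+1) = -(phi-1) e_i, hence |e_i| <= e_1 = 2 - phi; this gives
   a_i <= phi^2 F_i - i - phi termwise, and summing over the digits of n
   yields the bound. *)

Lemma F_rec i : F i.+2 = F i.+1 + F i.
Proof. by []. Qed.

(* F_j >= j; this makes the truncated subtraction in  a  exact. *)
Lemma F_ge_index j : j <= F j.
Proof.
suff [[_ j_le] _] : (0 < F j /\ j <= F j) /\ (0 < F j.+1 /\ j.+1 <= F j.+1) by [].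
elim: j => [|j [[Fj_gt0 j_le] [Fj1_gt0 j1_le]]] //.
by split=> //; rewrite F_rec; lia.
Qed.

Lemma aE k : a k + k.+2 = F k.+2.
Proof. by have := F_ge_index k.+2; rewrite /a; lia. Qed.

Lemma a_combine i : a i + a i.+1 < a i.+2.
Proof.
have := aE i; have := aE i.+1; have := aE i.+2.
have := F_rec i.+2; have := F_rec i.+3; lia.
Qed.

Lemma F_split i : F i.+2 + F i.+2 = F i + F i.+3.
Proof. by rewrite !F_rec; lia. Qed.

Lemma a_split i : a i.+2 + a i.+2 < a i + a i.+3.
Proof.
have := aE i; have := aE i.+2; have := aE i.+3; have := F_split i.+2.
have := F_rec i.+2; have := F_rec i.+3; lia.
Qed.

(* Weighted sums of a state, truncated at an index bound N: with w = F this is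
   the value of the state, with w = a its potential. *)
Definition wsum (N : nat) (s : state) (w : nat -> nat) : nat :=
  \sum_(0 <= j < N) s j * w j.

Lemma wsumS N s w : wsum N.+1 s w = wsum N s w + s N * w N.
Proof. exact: big_nat_recr. Qed.

Lemma wsum_widen N1 N2 s w : N1 <= N2 -> (forall j, N1 <= j -> s j = 0) ->
  wsum N1 s w = wsum N2 s w.
Proof.
move=> le12 s0; rewrite /wsum (@big_cat_nat _ _ _ N1 0 N2 _ _ (leq0n N1) le12) /=.
rewrite [X in _ = _ + X]big1_seq ?addn0 // => j /andP[_].
by rewrite mem_index_iota => /andP[/s0 -> _].
Qed.

Lemma sum_delta N x w : x < N -> \sum_(0 <= j < N) (x == j) * w j = w x.
Proof.
elim: N => [//|N IH] xN; rewrite big_nat_recr //=.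
case: (ltngtP x N) => [xN'|Nx|<-]; [by rewrite IH // mul0n addn0 | lia |].
rewrite mul1n big1_seq ?add0n // => j /andP[_].
by rewrite mem_index_iota => /andP[_ /gtn_eqF ->].
Qed.

Lemma wsum_count N l w : {in l, forall k, k < N} ->
  \sum_(0 <= j < N) count_mem j l * w j = \sum_(k <- l) w k.
Proof.
elim: l => [|x l IH] lN; first by rewrite big_nil big1.
rewrite big_cons -IH => [|k kl]; last by apply: lN; rewrite inE kl orbT.
rewrite -(@sum_delta N x w) -?big_split /=; last by apply: lN; rewrite inE eqxx.
by apply: eq_bigr => j _; rewrite mulnDl.
Qed.

Lemma wsum_exchange N s t rl cl w :
  (forall j, t j + count_mem j rl = s j + count_mem j cl) ->
  {in rl, forall k, k < N} -> {in cl, forall k, k < N} ->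
  wsum N t w + \sum_(k <- rl) w k = wsum N s w + \sum_(k <- cl) w k.
Proof.
move=> tE rlN clN; rewrite -(wsum_count _ _ w rlN) -(wsum_count _ _ w clN) -!big_split.
by apply: eq_bigr => j _ /=; rewrite -!mulnDl tE.
Qed.

Definition exchange (s t : state) (rl cl : seq nat) : Prop :=
  [/\ forall j, t j + count_mem j rl = s j + count_mem j cl,
      {in rl, forall k, 0 < k /\ 0 < s k},
      {in cl, forall k, 0 < k /\ exists2 k', k' \in rl & k <= k'.+1},
      \sum_(k <- cl) F k = \sum_(k <- rl) F k &
      (\sum_(k <- rl) a k).+1 <= \sum_(k <- cl) a k].

Ltac by_index_cases := repeat (case: eqP => ? /=; try subst; rewrite ?eqxx /=); lia.

Lemma move_exchange s t : move s t -> exists rl cl, exchange s t rl cl.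
Proof.
case=> [[s1 tE]|[[i [i2 [s1 [s2 tE]]]]|[[s2 tE]|[i [i3 [s3 tE]]]]]].
- exists [:: 1; 1], [:: 2]; split; rewrite ?big_cons ?big_nil //.
  + by move=> j; rewrite tE /=; by_index_cases.
  + by move=> k; rewrite !inE orbb => /eqP ->; lia.
  + by move=> k; rewrite inE => /eqP ->; split=> //; exists 1; rewrite ?inE.
- case: i i2 s1 s2 tE => [//|i] i2 /= s1 s2 tE.
  exists [:: i; i.+1], [:: i.+2]; split; rewrite ?big_cons ?big_nil ?addn0.
  + by move=> j; rewrite tE /=; by_index_cases.
  + by move=> k; rewrite !inE => /orP[] /eqP ->; lia.
  + by move=> k; rewrite inE => /eqP ->; split=> //; exists i.+1; rewrite ?inE ?eqxx ?orbT.
  + by rewrite F_rec addnC.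
  + exact: a_combine.
- exists [:: 2; 2], [:: 1; 3]; split; rewrite ?big_cons ?big_nil //.
  + by move=> j; rewrite tE /=; by_index_cases.
  + by move=> k; rewrite !inE orbb => /eqP ->; lia.
  + by move=> k; rewrite !inE => /orP[] /eqP ->; split=> //; exists 2; rewrite ?inE.
- case: i i3 s3 tE => [//|[//|i]] i3 /= s3 tE.
  exists [:: i.+2; i.+2], [:: i; i.+3]; split; rewrite ?big_cons ?big_nil ?addn0.
  + by move=> j; rewrite tE /=; by_index_cases.
  + by move=> k; rewrite !inE orbb => /eqP ->; lia.
  + by move=> k; rewrite !inE => /orP[] /eqP ->; (split; [lia|]);
      exists i.+2; rewrite ?inE ?eqxx //; lia.
  + by rewrite (F_split i).
  + exact: a_split.
Qed.

Definition represents (n : nat) (s : state) : Prop :=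
  [/\ s 0 = 0, forall j, n < j -> s j = 0 & wsum n.+2 s F = n].

Definition potential (n : nat) (s : state) : nat := wsum n.+2 s a.

Lemma represents_start n : represents n (start n).
Proof.
split=> //; first by move=> j nj; rewrite /start; case: eqP => // j1; lia.
rewrite /wsum -[RHS]muln1 -(@sum_delta n.+2 1 (fun j => n * F j)) //.
by apply: eq_bigr => j _; rewrite /start eq_sym; case: eqP => [<-|_]; rewrite ?mul1n.
Qed.

Lemma potential_start n : potential n (start n) = 0.
Proof.
by rewrite /potential /wsum big1 // => j _; rewrite /start; case: eqP => [->|//]; exact: muln0.
Qed.

(* Since F_(n+1) > n, a state of value n cannot occupy index n+1. *)
Lemma value_bounds_support n s : (forall j, n.+1 < j -> s j = 0) ->
  wsum n.+2 s F = n -> forall j, n < j -> s j = 0.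
Proof.
move=> sn1 val j nj; case: (ltngtP j n.+1) => [|/sn1 //|jE]; first lia.
move: val; rewrite wsumS -jE; have := F_ge_index j.
by case: (s j) => // m; rewrite mulSn; lia.
Qed.

Lemma move_potential n s t : represents n s -> move s t ->
  represents n t /\ (potential n s).+1 <= potential n t.
Proof.
move=> [s0 sn val] /move_exchange [rl [cl [tE rlP clP clF cla]]].
have rln : {in rl, forall k, k <= n}.
  by move=> k /rlP [_]; case: (leqP k n) => // /sn ->.
have rlN : {in rl, forall k, k < n.+2} by move=> k /rln; lia.
have clN : {in cl, forall k, k < n.+2} by move=> k /clP [_ [k' /rln]]; lia.
have cl0 : count_mem 0 cl = 0 by apply/count_memPn/negP => /clP [].
have tval : wsum n.+2 t F = n.
  by have := wsum_exchange _ _ _ _ _ F tE rlN clN; rewrite clF val => /addIn.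
have pot : (potential n s).+1 <= potential n t.
  rewrite /potential -(ltn_add2r (\sum_(k <- rl) a k)).
  by rewrite (wsum_exchange _ _ _ _ _ a tE rlN clN) ltn_add2l.
split=> //; split=> //; first by have := tE 0; lia.
apply: value_bounds_support tval => j nj.
have clj : count_mem j cl = 0 by apply/count_memPn/negP => /clN; lia.
by have := tE j; rewrite sn ?clj; lia.
Qed.

Lemma path_potential n s p : represents n s -> is_path s p ->
  represents n (last s p) /\ potential n s + size p <= potential n (last s p).
Proof.
elim: p s => [|t p IH] s rep /=; first by rewrite addn0.
case=> /(move_potential _ _ _ rep) [rept st] /(IH t rept) [replast tlast].
by split=> //; lia.
Qed.

Definition zeck_digits (b : state) : Prop :=
  [/\ b 0 = 0, forall j, b j <= 1 & forall j, 0 < b j -> b j.+1 = 0].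

(* A state admitting no legal move has Zeckendorf digits: a doubled index
   allows C_1, S_2 or S_i, and two consecutive occupied indices allow C_i. *)
Lemma terminal_zeck_digits s : s 0 = 0 -> (forall t, ~ move s t) ->
  zeck_digits s.
Proof.
move=> s0 stuck; split=> // [j|j sj].
- case: (leqP (s j) 1) => // s2; exfalso.
  case: j s2 => [|[|[|j]]] s2; first by rewrite s0 in s2.
  + by apply: (stuck (fun j => if j == 1 then s j - 2
      else if j == 2 then s j + 1 else s j)); left.
  + by apply: (stuck (fun j => if j == 2 then s j - 2
      else if j == 1 then s j + 1 else if j == 3 then s j + 1 else s j));
      right; right; left.
  + by apply: (stuck (fun i => if i == j.+3 then s i - 2
      else if i == j.+1 then s i + 1 else if i == j.+4 then s i + 1 else s i));
      right; right; right; exists j.+3.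
- case: (posnP (s j.+1)) => // sj1; exfalso.
  case: j sj sj1 => [|j] sj sj1; first by rewrite s0 in sj.
  apply: (stuck (fun i => if i == j.+1 then s i - 1 else if i == j.+2 then s i - 1
    else if i == j.+3 then s i + 1 else s i)).
  by right; left; exists j.+2.
Qed.

Lemma zeck_value_lt b m : zeck_digits b -> wsum m.+1 b F < F m.+1.
Proof.
move=> [b0 b1 bnc]; elim: m {-2}m (leqnn m) => [|m IH] k km.
  by move: km; rewrite leqn0 => /eqP ->; rewrite /wsum big_nat1 b0.
case: k km => [|[|k]] km.
- by rewrite /wsum big_nat1 b0.
- by rewrite wsumS /wsum big_nat1 b0 /=; have := b1 1; lia.
- rewrite wsumS; have := F_rec k.+1; have := F_rec k.
  have := b1 k.+2; have := bnc k.+1.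
  case: (b k.+2) => [|[|//]] bk _.
  + by have := IH k.+1 ltac:(lia); lia.
  + have bk1 : b k.+1 = 0 by case: (b k.+1) bk => // m' /(_ isT).
    rewrite wsumS bk1.
    by have := IH k ltac:(lia); lia.
Qed.

(* Equal values force equal top digits, since lower digits weigh less. *)
Lemma zeck_top_digit b b' N : zeck_digits b -> zeck_digits b' ->
  wsum N.+1 b F = wsum N.+1 b' F -> b N = b' N.
Proof.
have top_lt c c' m : zeck_digits c -> c m.+1 < c' m.+1 -> c' m.+1 <= 1 ->
    wsum m.+2 c F < wsum m.+2 c' F.
  move=> zc lt1 le1; rewrite (wsumS m.+1 c) (wsumS m.+1 c').
  have -> : c m.+1 = 0 by lia.
  have -> : c' m.+1 = 1 by lia.
  by have := zeck_value_lt _ m zc; lia.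
move=> zb zb'; case: N => [|m] val.
  by case: zb => ->; case: zb' => ->.
have [_ b1 _] := zb; have [_ b1' _] := zb'.
case: (ltngtP (b m.+1) (b' m.+1)) => // lt; exfalso.
- by have := top_lt b b' m zb lt (b1' _); lia.
- by have := top_lt b' b m zb' lt (b1 _); lia.
Qed.

Lemma zeck_digits_uniq b b' N : zeck_digits b -> zeck_digits b' ->
  wsum N b F = wsum N b' F -> forall j, j < N -> b j = b' j.
Proof.
move=> zb zb'; elim: N => [//|N IH] val j jN.
have top := zeck_top_digit _ _ N zb zb' val.
move: val; rewrite !wsumS top => /addIn val.
by case: (ltngtP j N) => [/(IH val)| |->] //; lia.
Qed.

Lemma is_zeck_digits K d n : is_zeck K d n -> zeck_digits (fun j => d j).
Proof.
move=> [dK [dnc _]]; split=> [|j|j] /=; first by case: (boolP (d 0)) => // /dK.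
  by case: (d j).
by case: (boolP (d j)) => // /dnc /negbTE ->.
Qed.

Lemma zeck_wsum K (d : nat -> bool) w N : (forall i, d i -> 1 <= i < K) -> K <= N ->
  wsum N (fun j => d j) w = \sum_(1 <= i < K) d i * w i.
Proof.
move=> dK KN; rewrite -(wsum_widen K) // => [|j Kj]; last first.
  by case: (boolP (d j)) => // /dK; lia.
case: K dK {KN} => [|K] dK; first by rewrite /wsum !big_geq.
rewrite /wsum big_ltn //; case: (boolP (d 0)) => [/dK //|_] /=.
by rewrite add0n.
Qed.

Lemma terminal_state_eq n K d s : represents n s -> zeck_digits s ->
  is_zeck K d n -> forall j, s j = d j.
Proof.
move=> [s0 sn val] zs zd; have [dK [_ dval]] := zd.
have zsN : forall j, n.+2 <= j -> s j = 0 by move=> j nj; apply: sn; lia.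
have val_s : wsum (K + n.+2) s F = n by rewrite -(wsum_widen n.+2) ?leq_addl.
have val_d : wsum (K + n.+2) (fun j => d j) F = n.
  by rewrite (zeck_wsum _ _ _ _ dK) ?leq_addr.
have eqN := zeck_digits_uniq _ _ _ zs (is_zeck_digits _ _ _ zd)
  (etrans val_s (esym val_d)).
move=> j; case: (ltnP j (K + n.+2)) => [/eqN //|jN].
rewrite zsN; last lia.
by case: (boolP (d j)) => // /dK; lia.
Qed.

Lemma game_path_length n K d p : is_zeck K d n -> game_path n p ->
  size p <= \sum_(1 <= i < K) a i * d i.
Proof.
move=> zd [pth stuck].
have [rep] := path_potential _ _ _ (represents_start n) pth.
rewrite potential_start add0n; set s := last _ p in rep stuck *.
have [s0 sn _] := rep; have [dK _] := zd.
have eqd := terminal_state_eq _ _ _ _ rep (terminal_zeck_digits _ s0 stuck) zd.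
rewrite /potential (wsum_widen n.+2 (K + n.+2)) ?leq_addl //; last first.
  by move=> j nj; apply: sn; lia.
have -> : wsum (K + n.+2) s a = wsum (K + n.+2) (fun j => d j) a.
  by apply: eq_bigr => j _; rewrite eqd.
rewrite (zeck_wsum _ _ _ _ dK) ?leq_addr //.
by under eq_bigr do rewrite mulnC.
Qed.

(* The golden-ratio estimate.  Here x stands for sqrt 5, so that
   phi = (1 + x) / 2 and phi^2 = (3 + x) / 2. *)

Section GoldenBound.
Local Open Scope ring_scope.

Variable R : realFieldType.
Variable x : R.
Hypothesis x_sq : x * x = 5.
Hypothesis x_ge0 : 0 <= x.

Definition golden_error (i : nat) : R := (F i.+1)%:R - (1 + x) / 2 * (F i)%:R.

Lemma golden_errorS i : golden_error i.+1 = - ((x - 1) / 2) * golden_error i.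
Proof.
rewrite /golden_error F_rec natrD; apply/eqP; rewrite -subr_eq0; apply/eqP.
transitivity ((F i)%:R * (5 - x * x) / 4); first by field.
by rewrite x_sq subrr mulr0 mul0r.
Qed.

(* |e_i| <= e_1 = 2 - phi, since the ratio has absolute value phi - 1 < 1. *)
Lemma golden_error_bound i : (0 < i)%N ->
  - ((3 - x) / 2) <= golden_error i <= (3 - x) / 2.
Proof.
have x_le3 : x <= 3 by have := x_sq; have := x_ge0; nra.
have x_ge1 : 1 <= x by have := x_sq; have := x_ge0; nra.
elim: i => [//|[|i] IH] _.
  by rewrite /golden_error /=; apply/andP; split; lra.
have /andP[lo hi] := IH isT.
rewrite golden_errorS; set c := (x - 1) / 2.
have c_ge0 : 0 <= c by rewrite /c; lra.
have c_le1 : c <= 1 by rewrite /c; lra.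
by apply/andP; split; nra.
Qed.

Lemma a_golden_bound i : (0 < i)%N ->
  (a i)%:R <= (3 + x) / 2 * (F i)%:R - i%:R - (1 + x) / 2.
Proof.
move=> i_gt0; have /andP[_ hi] := golden_error_bound _ i_gt0.
have aR : (a i)%:R = (F i.+2)%:R - i%:R - 2 :> R.
  by rewrite -(aE i) -addn2 !natrD; ring.
have eR : golden_error i = (F i.+2)%:R - (3 + x) / 2 * (F i)%:R.
  by rewrite /golden_error F_rec natrD; field.
by rewrite aR; lra.
Qed.

Lemma potential_golden_bound K (d : nat -> bool) : (forall i, d i -> 0 < i)%N ->
  (\sum_(1 <= i < K) a i * d i)%N%:R <=
    (3 + x) / 2 * (\sum_(1 <= i < K) d i * F i)%N%:R
    - (\sum_(1 <= i < K) i * d i)%N%:R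
    - (1 + x) / 2 * (\sum_(1 <= i < K) (d i : nat))%N%:R.
Proof.
move=> dpos; rewrite !natr_sum !mulr_sumr -!sumrB; apply: ler_sum => i _.
case: (boolP (d i)) => [/dpos di|_]; last by rewrite !(muln0, mul0n, mulr0, subr0).
by rewrite !(muln1, mul1n, mulr1); exact: a_golden_bound.
Qed.

End GoldenBound.

Local Open Scope ring_scope.

Theorem theorem1p2 (R : realType) (n : nat) (K : nat) (d : nat -> bool)
    (p : seq state) :
  (1 <= n)%N -> is_zeck K d n -> game_path n p ->
  (size p <= \sum_(1 <= i < K) a i * d i)%N /\
  ((\sum_(1 <= i < K) a i * d i)%N%:R : R) <=
    (3 + Num.sqrt 5) / 2 * n%:R
    - (\sum_(1 <= i < K) i * d i)%N%:R
    - (1 + Num.sqrt 5) / 2 * (\sum_(1 <= i < K) (d i : nat))%N%:R.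
Proof.
move=> _ zd gp; split; first exact: (game_path_length _ _ _ _ zd gp).
have [dK [_ <-]] := zd.
have sqrt5_sq : Num.sqrt 5 * Num.sqrt 5 = 5 :> R.
  by rewrite -expr2 sqr_sqrtr // ler0n.
apply: (potential_golden_bound _ _ sqrt5_sq (sqrtr_ge0 _)) => i /dK.
by case/andP.
Qed.
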